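(* For every integer $k\ge1$, $$t^+_k(2)=\tfrac16\left(2^k-(-1)^k\left(1+(-3)^{\lceil k/2\rceil}\right)\right),\qquad t^-_k(2)=\tfrac16\left(2^k-(-1)^k\left(1-(-3)^{\lceil k/2\rceil}\right)\right).$$
   Context: $T_\pm$ is a directed graph on three vertices $x_0,x_1,x_2$ (a triangle) with both arcs between each pair; the clockwise arcs $x_0\to x_1$, $x_1\to x_2$, $x_2\to x_0$ have sign $+$ and the reverse (counterclockwise) arcs have sign $-$. A walk is positive (negative) if the product of the signs of its arcs is $+$ ($-$). For vertices $x,y$ such that the clockwise path from $x$ to $y$ has length $2$ (i.e. $y\to x$ is a clockwise arc), $t^+_k(2)$ (resp. $t^-_k(2)$) is the number of positive (resp. negative) walks of length $k$ from $x$ to $y$. *)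

From mathcomp Require Import all_boot all_order all_algebra.
Set Implicit Arguments. Unset Strict Implicit. Unset Printing Implicit Defensive.
Import GRing.Theory Num.Theory.
Local Open Scope ring_scope.

(* The signed digraph T_pm on vertices x_0,x_1,x_2, represented as 'I_3.
   Clockwise successor of x_i is x_{i+1 mod 3} (ordS). *)

Definition Tarc (u v : 'I_3) : bool := u != v.

Definition Tsign (u v : 'I_3) : int := if v == ordS u then 1 else -1.

(* A walk of length k is given by its vertex sequence v_0,...,v_k
   (arcs are determined by their endpoints since there are no parallel arcs). *)
Definition is_walk (k : nat) (x y : 'I_3) (w : {ffun 'I_k.+1 -> 'I_3}) : bool :=
  [&& w ord0 == x, w ord_max == y &
      [forall i : 'I_k, Tarc (w (inord i)) (w (inord i.+1))]].

Definition walk_sign (k : nat) (w : {ffun 'I_k.+1 -> 'I_3}) : int :=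
  \prod_(i < k) Tsign (w (inord i)) (w (inord i.+1)).

Definition tplus (k : nat) (x y : 'I_3) : nat :=
  #|[set w : {ffun 'I_k.+1 -> 'I_3} | is_walk x y w && (walk_sign w == 1)]|.
Definition tminus (k : nat) (x y : 'I_3) : nat :=
  #|[set w : {ffun 'I_k.+1 -> 'I_3} | is_walk x y w && (walk_sign w == -1)]|.

From mathcomp Require Import all_boot all_order all_algebra.
From mathcomp Require Import ring lra.
Import GRing.Theory Num.Theory.
Local Open Scope ring_scope.

(* Weight a walk by the product of the entries of a matrix along its arcs; the
   total weight of the walks of length k from x to y is the (x, y) entry of the
   k-th power. With the adjacency matrix A and the signed adjacency matrix S of
   T_pm, this gives t^+_k + t^-_k = A^k x y and t^+_k - t^-_k = S^k x y.
   Writing J for the all-ones matrix, A = J - 1 and J^2 = 3J, so A^k is an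
   explicit combination of J and 1; and S^2 = J - 3 while SJ = 0, so S^3 = -3S
   and the powers of S alternate between multiples of S and of J - 3. *)

Section WalkSums.
Variables (R : pzSemiRingType) (n : nat).

Definition walk_weight (M : 'M[R]_n) {k} (w : {ffun 'I_k.+1 -> 'I_n}) : R :=
  \prod_(i < k) M (w (inord i)) (w (inord i.+1)).

Definition rcons_walk {k} (w : {ffun 'I_k.+1 -> 'I_n}) (z : 'I_n) :
    {ffun 'I_k.+2 -> 'I_n} :=
  [ffun i : 'I_k.+2 => if (i < k.+1)%N then w (inord i) else z].

Lemma rcons_walk_lt k (w : {ffun 'I_k.+1 -> 'I_n}) z (i : nat) :
  (i < k.+1)%N -> rcons_walk w z (inord i) = w (inord i).
Proof. by move=> lt_ik; rewrite ffunE inordK ?lt_ik // ltnW. Qed.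

Lemma rcons_walk_max k (w : {ffun 'I_k.+1 -> 'I_n}) z : rcons_walk w z ord_max = z.
Proof. by rewrite ffunE ltnn. Qed.

Lemma rcons_walk0 k (w : {ffun 'I_k.+1 -> 'I_n}) z : rcons_walk w z ord0 = w ord0.
Proof.
by rewrite -[ord0]inord_val rcons_walk_lt //; congr (w _); apply/val_inj; rewrite /= inordK.
Qed.

Lemma rcons_walk_bij k :
  bijective (fun p : {ffun 'I_k.+1 -> 'I_n} * 'I_n => rcons_walk p.1 p.2).
Proof.
exists (fun w : {ffun 'I_k.+2 -> 'I_n} => ([ffun j : 'I_k.+1 => w (inord j)], w ord_max)).
- case=> w z /=; rewrite rcons_walk_max; congr pair.
  by apply/ffunP=> j; rewrite ffunE rcons_walk_lt ?inord_val.
- move=> w; apply/ffunP=> i; rewrite !ffunE.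
  case: ifP => [lt_ik | /negbT]; first by congr (w _); apply/val_inj; rewrite /= !inordK // ltnW.
  rewrite -leqNgt => le_ki; congr (w _); apply/val_inj/eqP.
  by rewrite eqn_leq le_ki -ltnS ltn_ord.
Qed.

Lemma walk_weight_rcons (M : 'M[R]_n) k (w : {ffun 'I_k.+1 -> 'I_n}) z :
  walk_weight M (rcons_walk w z) = walk_weight M w * M (w ord_max) z.
Proof.
rewrite /walk_weight big_ord_recr /= rcons_walk_lt //.
have -> : inord k.+1 = ord_max :> 'I_k.+2 by apply/val_inj; rewrite /= inordK.
have -> : inord k = ord_max :> 'I_k.+1 by apply/val_inj; rewrite /= inordK.
rewrite rcons_walk_max; congr (_ * _); apply: eq_bigr => i _.
by rewrite !rcons_walk_lt // ltnS // ltnW.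
Qed.

Lemma sum_walk_weight (M : 'M[R]_n) k x y :
  \sum_(w : {ffun 'I_k.+1 -> 'I_n} | (w ord0 == x) && (w ord_max == y)) walk_weight M w
  = (M ^+ k) x y.
Proof.
elim: k y => [|k IHk] y.
  rewrite (reindex (fun z : 'I_n => [ffun=> z])) /=; last first.
    exists (fun w : {ffun 'I_1 -> 'I_n} => w ord0) => [z|w] _; rewrite ?ffunE //.
    by apply/ffunP=> i; rewrite ffunE (ord1 i).
  rewrite expr0 mxE /walk_weight; under eq_bigl => z do rewrite !ffunE.
  under eq_bigr do rewrite big_ord0.
  case: eqP => [<- | /eqP neq_xy].
    by under eq_bigl => z do rewrite andbb; rewrite big_pred1_eq.
  by rewrite big_pred0 // => z; apply/andP => -[/eqP-> /eqP eq_xy]; rewrite eq_xy eqxx in neq_xy.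
rewrite (reindex _ (onW_bij _ (rcons_walk_bij k))) /=.
under eq_bigl => p do rewrite rcons_walk0 rcons_walk_max.
under eq_bigr => p _ do rewrite walk_weight_rcons.
rewrite -(pair_big_dep (fun w : {ffun 'I_k.+1 -> 'I_n} => w ord0 == x) (fun _ z => z == y)
  (fun w z => walk_weight M w * M (w ord_max) z)) /=.
under eq_bigr => w _ do rewrite big_pred1_eq.
rewrite exprSr -mulmxE mxE.
rewrite (partition_big (fun w : {ffun 'I_k.+1 -> 'I_n} => w ord_max) xpredT) //=.
apply: eq_bigr => z _; rewrite -IHk big_distrl /=.
by apply: eq_bigr => w /andP[_ /eqP->].
Qed.

Lemma prod_natr_bool (I : finType) (b : pred I) : \prod_i (b i)%:R = [forall i, b i]%:R :> R.
Proof.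
have -> : [forall i, b i] = \big[andb/true]_i b i by rewrite big_andE.
by apply/esym/(big_morph (fun c : bool => c%:R)) => // c d; case: c; rewrite ?mul1r ?mul0r.
Qed.

Lemma mul_const_mx1 :
  (const_mx 1 : 'M[R]_n) *m (const_mx 1 : 'M[R]_n) = n%:R *: const_mx 1.
Proof.
apply/matrixP => i j; rewrite !mxE; under eq_bigr do rewrite !mxE mulr1.
by rewrite sumr_const card_ord mulr1.
Qed.

End WalkSums.

Arguments walk_weight {R n} M {k} w.

Definition follows_arcs {k} (w : {ffun 'I_k.+1 -> 'I_3}) : bool :=
  [forall i : 'I_k, Tarc (w (inord i)) (w (inord i.+1))].

Definition Tpm_adj : 'M[int]_3 := \matrix_(u, v) (Tarc u v)%:R.
Definition Tpm_signed : 'M[int]_3 := \matrix_(u, v) ((Tarc u v)%:R * Tsign u v).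

Local Notation J := (const_mx 1 : 'M[int]_3).

Lemma walk_sign_pm {k} (w : {ffun 'I_k.+1 -> 'I_3}) :
  (walk_sign w == 1) || (walk_sign w == -1).
Proof.
apply: (big_ind (fun s : int => (s == 1) || (s == -1))) => //.
  by move=> s t /orP[] /eqP-> /orP[] /eqP->; rewrite ?mulr1 ?mulrN1 ?eqxx ?orbT.
by move=> i _; rewrite /Tsign; case: ifP; rewrite eqxx ?orbT.
Qed.

Section Counting.
Variables (k : nat) (x y : 'I_3).

Lemma walk_weight_Tpm_adj (w : {ffun 'I_k.+1 -> 'I_3}) :
  walk_weight Tpm_adj w = (follows_arcs w)%:R.
Proof. by rewrite -prod_natr_bool; apply: eq_bigr => i _; rewrite mxE. Qed.

Lemma walk_weight_Tpm_signed (w : {ffun 'I_k.+1 -> 'I_3}) :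
  walk_weight Tpm_signed w = (follows_arcs w)%:R * walk_sign w.
Proof.
rewrite -prod_natr_bool /walk_sign -big_split /=.
by apply: eq_bigr => i _; rewrite mxE.
Qed.

Lemma card_walks (P : pred {ffun 'I_k.+1 -> 'I_3}) :
  (#|[set w | is_walk x y w && P w]|)%:R
  = \sum_(w : {ffun 'I_k.+1 -> 'I_3} | (w ord0 == x) && (w ord_max == y))
      (follows_arcs w && P w)%:R :> int.
Proof.
rewrite cardsE -sum1_card natr_sum big_mkcond [RHS]big_mkcond /=.
apply: eq_bigr => w _; rewrite unfold_in /is_walk.
by case: (w ord0 == x); case: (w ord_max == y) => //=; case: ifP.
Qed.

Lemma tplus_add_tminus : (tplus k x y)%:R + (tminus k x y)%:R = (Tpm_adj ^+ k) x y :> int.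
Proof.
rewrite !card_walks -big_split -sum_walk_weight; apply: eq_bigr => w _.
rewrite walk_weight_Tpm_adj; case: (follows_arcs w) => //=.
by case/orP: (walk_sign_pm w) => /eqP->.
Qed.

Lemma tplus_sub_tminus : (tplus k x y)%:R - (tminus k x y)%:R = (Tpm_signed ^+ k) x y :> int.
Proof.
rewrite !card_walks -sumrB -sum_walk_weight; apply: eq_bigr => w _.
rewrite walk_weight_Tpm_signed; case: (follows_arcs w); rewrite ?mul0r ?subrr //=.
by case/orP: (walk_sign_pm w) => /eqP->.
Qed.

End Counting.

Lemma Tpm_adjE : Tpm_adj = J - 1.
Proof. by apply/matrixP => i j; rewrite !mxE /Tarc; case: eqP. Qed.

Lemma Tpm_signed_sqr : Tpm_signed ^+ 2 = J - 3%:M.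
Proof.
apply/matrixP => i j; rewrite expr2 -mulmxE !mxE !big_ord_recr big_ord0 /= !mxE.
by case: i => [[|[|[|?]]] ?] //; case: j => [[|[|[|?]]] ?] //; vm_compute.
Qed.

Lemma Tpm_signed_mul_const_mx1 : Tpm_signed *m J = 0.
Proof.
apply/matrixP => i j; rewrite !mxE !big_ord_recr big_ord0 /= !mxE.
by case: i => [[|[|[|?]]] ?] //; vm_compute.
Qed.

Lemma Tpm_adj_exp k : 3 *: Tpm_adj ^+ k = (2 ^+ k - (-1) ^+ k) *: J + (3 * (-1) ^+ k)%:M.
Proof.
elim: k => [|k IHk]; first by rewrite !expr0 subrr scale0r add0r mulr1 scalemx1.
rewrite exprSr scalerAl IHk Tpm_adjE mulrBr mulr1 mulrDl -scalerAl -mulmxE mul_const_mx1.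
by rewrite mul_scalar_mx; apply/matrixP => i j; rewrite !mxE !exprS; ring.
Qed.

Lemma Tpm_signed_exp_odd m : Tpm_signed ^+ m.*2.+1 = (-3) ^+ m *: Tpm_signed.
Proof.
elim: m => [|m IHm]; first by rewrite expr1 expr0 scale1r.
rewrite doubleS -[m.*2.+3]addn2 exprD IHm Tpm_signed_sqr -scalerAl mulrBr -!mulmxE.
by rewrite Tpm_signed_mul_const_mx1 mul_mx_scalar sub0r -scaleNr scalerA exprSr.
Qed.

Lemma Tpm_signed_exp_even m : Tpm_signed ^+ m.*2.+2 = (-3) ^+ m *: (J - 3%:M).
Proof. by rewrite exprSr Tpm_signed_exp_odd -scalerAl -expr2 Tpm_signed_sqr. Qed.

Lemma ordSS_neq (x : 'I_3) : x != ordS (ordS x).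
Proof. by case: x => [[|[|[|?]]] ?]. Qed.

Lemma Tpm_signed_ordSS (x : 'I_3) : Tpm_signed x (ordS (ordS x)) = -1.
Proof. by rewrite mxE; case: x => [[|[|[|?]]] ?]. Qed.

Lemma Tpm_adj_exp_offdiag k {x y : 'I_3} :
  x != y -> 3 * (Tpm_adj ^+ k) x y = 2 ^+ k - (-1) ^+ k.
Proof.
move=> neq_xy; have := congr1 (fun M : 'M_3 => M x y) (Tpm_adj_exp k).
by rewrite /= !mxE (negbTE neq_xy) mulr1 mulr0n addr0.
Qed.

Lemma Tpm_signed_exp_ordSS k (x : 'I_3) :
  3 * (Tpm_signed ^+ k.+1) x (ordS (ordS x)) = - ((-1) ^+ k.+1 * (-3) ^+ uphalf k.+1).
Proof.
rewrite -[k](odd_double_half k) /=; set m := k./2.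
have sign_even : (-1) ^+ m.*2 = 1 :> int by rewrite -mul2n exprM sqrrN expr1n.
case: (odd k) => /=.
  rewrite add1n add0n uphalf_double Tpm_signed_exp_even !mxE (negbTE (ordSS_neq x)).
  by rewrite mulr0n subr0 !exprS sign_even; ring.
rewrite add0n doubleK Tpm_signed_exp_odd mxE Tpm_signed_ordSS.
by rewrite !exprS sign_even; ring.
Qed.

Theorem lemma13 (k : nat) (x y : 'I_3) :
  (1 <= k)%N -> y = ordS (ordS x) ->
  (tplus k x y)%:R = (1 / 6 : rat) * (2 ^+ k - (-1) ^+ k * (1 + (-3) ^+ uphalf k))
  /\
  (tminus k x y)%:R = (1 / 6 : rat) * (2 ^+ k - (-1) ^+ k * (1 - (-3) ^+ uphalf k)).
Proof.
case: k => // k _ ->.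
have := Tpm_adj_exp_offdiag k.+1 (ordSS_neq x).
have := Tpm_signed_exp_ordSS k x.
rewrite -tplus_add_tminus -tplus_sub_tminus.
move=> /(congr1 (intr : int -> rat)) + /(congr1 (intr : int -> rat)).
rewrite !(rmorphM, rmorphB, rmorphN, rmorphXn) !rmorph_nat rmorphD !rmorph_nat rmorph1 /=.
by move=> signed_eq adj_eq; split; lra.
Qed.
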